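(* Let $X$ be a compact metrizable space and let $\{U_i\}_{i\in I}$ be a covering of $X$ by open sets. Suppose that for each $i\in I$, $\ell_i$ is a positive log-scale on $\overline{U_i}$ such that for every pair $i,j\in I$ the log-scales $\ell_i$ and $\ell_j$ are Lipschitz equivalent on $\overline{U_i}\cap\overline{U_j}$. Then there is a log-scale $\ell$ on $X$ such that $\ell$ is Lipschitz equivalent to $\ell_i$ on $\overline{U_i}$ for every $i\in I$.
   Context: A log-scale on a set $Y$ is a function $\ell:Y\times Y\to\mathbb{R}\cup\{\infty\}$ such that $\ell(x,y)=\ell(y,x)$, $\ell(x,y)=+\infty$ iff $x=y$, and for some $\delta\ge0$, $\ell(x,z)\ge\min(\ell(x,y),\ell(y,z))-\delta$ for all $x,y,z$. A log-scale on a topological space is assumed to define its topology (via a metric $|\cdot|$ with $c^{-1}\alpha^{\ell(x,y)}\le|x-y|\le c\alpha^{\ell(x,y)}$ for constants $0<\alpha<1$, $c>1$). A log-scale is positive if all its values are positive. Two log-scales $\ell,\ell'$ on a set are Lipschitz equivalent if $|\ell(x,y)-\ell'(x,y)|$ is bounded by a constant for all $x,y$. *)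

From HB Require Import structures.
From mathcomp Require Import all_boot all_order all_algebra.
From mathcomp Require Import all_classical all_reals all_analysis.
Set Implicit Arguments. Unset Strict Implicit. Unset Printing Implicit Defensive.
Import Order.TTheory GRing.Theory Num.Theory.
Local Open Scope classical_set_scope.
Local Open Scope ring_scope.

Section LogScales.
Context {R : realType} {X : topologicalType}.

Definition is_metric_on (A : set X) (d : X -> X -> R) : Prop :=
  forall x y z, A x -> A y -> A z ->
    [/\ 0 <= d x y, (d x y = 0 <-> x = y), d x y = d y x
      & d x z <= d x y + d y z].

(* the metric d on A induces the subspace topology of A (same
   neighbourhoods of every point of A) *)
Definition metric_induces_topology (A : set X) (d : X -> X -> R) : Prop :=
  forall x, A x -> forall V : set X,
    (exists2 e : R, 0 < e & forall y, A y -> d x y < e -> V y) <->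
    (exists W : set X, [/\ open W, W x & forall y, A y -> W y -> V y]).

Definition metrizable_space : Prop :=
  exists d : X -> X -> R, is_metric_on setT d /\ metric_induces_topology setT d.

(* alpha ^ l for l in R u {+oo}, with alpha ^ (+oo) = 0 *)
Definition alpha_pow (alpha : R) (l : \bar R) : R :=
  match l with EFin r => powR alpha r | _ => 0 end.

(* log-scale on the subspace A of X (values outside A x A are irrelevant);
   it is required to define the (subspace) topology of A *)
Definition log_scale_on (A : set X) (l : X -> X -> \bar R) : Prop :=
  [/\ (forall x y, A x -> A y -> l x y = l y x),
      (forall x y, A x -> A y -> l x y <> -oo%E),
      (forall x y, A x -> A y -> (l x y = +oo%E <-> x = y)),
      (exists2 delta : R, 0 <= delta &
         forall x y z, A x -> A y -> A z ->
           (Order.min (l x y) (l y z) - delta%:E <= l x z)%E)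
    & (exists d : X -> X -> R, exists alpha c : R,
         [/\ is_metric_on A d, metric_induces_topology A d,
             0 < alpha < 1, 1 < c
           & forall x y, A x -> A y ->
               c^-1 * alpha_pow alpha (l x y) <= d x y /\
               d x y <= c * alpha_pow alpha (l x y)])].

Definition positive_log_scale_on (A : set X) (l : X -> X -> \bar R) : Prop :=
  log_scale_on A l /\ (forall x y, A x -> A y -> (0 < l x y)%E).

Definition lipschitz_equiv_on (A : set X) (l l' : X -> X -> \bar R) : Prop :=
  exists C : R, forall x y, A x -> A y ->
    (l x y <= l' x y + C%:E)%E /\ (l' x y <= l x y + C%:E)%E.

End LogScales.

(* Fix a metric [d0] on [X] and, by compactness, finitely many charts [U_k]
   such that every [d0]-ball of some radius [eps] lies in one of them.  Put
   [L x y := l_k x y] for a chart [k] whose closure contains [x] and [y], and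
   [L x y := 0] if there is none; such pairs are [eps]-apart.  Each [l_i] is
   bounded on [eps]-apart pairs of the compact set [closure U_i], so finitely
   many constants make [L] Lipschitz equivalent to every [l_i] and give one
   defect [delta] in the ultrametric inequality for [L].  With [a] chosen so
   that [a ^ (- delta) = sqrt 2], [rho := a ^ L] satisfies
   [rho x z <= sqrt 2 * max (rho x y) (rho y z)], and Frink's chain
   construction turns it into a metric between [rho / 2] and [rho].  This
   metric induces the topology of [X] because [L x y] is large exactly when
   [y] is close to [x]. *)

From HB Require Import structures.
From mathcomp Require Import all_boot all_order all_algebra.
From mathcomp Require Import all_classical all_reals all_analysis.
From mathcomp Require Import finmap ring lra zify.
Import Order.TTheory GRing.Theory Num.Theory.
Local Open Scope classical_set_scope.
Local Open Scope ring_scope.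

Lemma finite_common_bound {R : realType} {F : finType} (P : F -> R -> Prop) :
  (forall k, exists C, P k C) -> (forall k C C', P k C -> C <= C' -> P k C') ->
  exists2 C, 0 <= C & forall k, P k C.
Proof.
move=> ex mono; have [f Pf] := choice ex.
exists (\big[Num.max/0]_k f k); first exact: bigmax_ge_id.
by move=> k; apply: mono (Pf k) _; apply: le_bigmax.
Qed.

Section PointedAt.
Context {X : topologicalType} (x0 : X).

(* [compact_cover] is stated for pointed spaces only; any point will do. *)
Let pointed_at : Type := X.
HB.instance Definition _ := Topological.on pointed_at.
HB.instance Definition _ := isPointed.Build pointed_at x0.

Lemma compact_cover_at (A : set X) : compact A -> cover_compact A.
Proof. by move=> Ac; have : @compact pointed_at A := Ac; rewrite compact_cover. Qed.

End PointedAt.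

Section MetricSubspaces.
Context {R : realType} {X : topologicalType}.

Lemma metric_ball_open (d : X -> X -> R) (p : X) (r : R) :
  is_metric_on setT d -> metric_induces_topology setT d ->
  open [set y | d p y < r].
Proof.
move=> dm dt; rewrite openE => z /= pz.
have [|W [oW Wz WB]] := (dt z I [set y | d p y < r]).1.
  exists (r - d p z) => [|y _ zy]; first by rewrite subr_gt0.
  have [_ _ _ tri] := dm p z y I I I; rewrite /=; lra.
by rewrite /interior nbhsE; exists W => // y Wy; apply: WB.
Qed.

Lemma lebesgue_number {K : set X} {rho : X -> X -> R} {J : Type} {G : J -> set X} :
  compact K -> is_metric_on K rho -> metric_induces_topology K rho ->
  (forall j, open (G j)) -> (forall x, K x -> exists j, G j x) ->
  exists (F : finType) (c : F -> J), exists2 e : R, 0 < e &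
    forall x, K x -> exists k, forall y, K y -> rho x y < e -> G (c k) y.
Proof.
move=> Kc rhom rhot Go Gcov.
have [[x0 Kx0]|K0] := pselect (exists x, K x); last first.
  by exists void, (@of_void J), 1 => // x Kx; exfalso; apply: K0; exists x.
have [j0 _] := Gcov x0 Kx0.
have chart x : exists jr : J * R, K x ->
    0 < jr.2 /\ forall y, K y -> rho x y < jr.2 -> G jr.1 y.
  have [Kx|nKx] := pselect (K x); last by exists (j0, 1).
  have [j Gjx] := Gcov x Kx.
  have [r r0 rG] : exists2 r : R, 0 < r & forall y, K y -> rho x y < r -> G j y.
    by apply/(rhot x Kx); exists (G j); split => // y _.
  by exists (j, r).
have [jr jrP] := choice chart.
have nbhd x : exists O : set X, K x ->
    [/\ open O, O x & forall y, K y -> O y -> rho x y < (jr x).2 / 2].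
  have [Kx|nKx] := pselect (K x); last by exists set0.
  have [r0 _] := jrP x Kx.
  have [|W [oW Wx WB]] := (rhot x Kx [set y | rho x y < (jr x).2 / 2]).1.
    by exists ((jr x).2 / 2) => //; rewrite divr_gt0.
  by exists W.
have [B BP] := choice nbhd.
have [S SK KS] : finite_subset_cover K B K.
  apply: (compact_cover_at x0 K Kc X) => [x Kx|x Kx]; first by have [] := BP x Kx.
  by exists x => //; have [] := BP x Kx.
pose r (k : S) := (jr (val k)).2 / 2.
have r_gt0 k : 0 < r k.
  by rewrite divr_gt0 //; have [] := jrP (val k) (set_mem (SK _ (valP k))).
exists S, (fun k => (jr (val k)).1), (\big[Num.min/1]_k r k).
  by apply: lt_bigmin.
move=> x Kx; have [p Sp Bpx] := KS x Kx.
exists [` Sp]%fset => y Ky xy.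
have Kp : K p := set_mem (SK p Sp).
have [_ rG] := jrP p Kp; apply: rG => //.
have [_ _ _ tri] := rhom p x y Kp Kx Ky.
have [_ _ /(_ x Kx Bpx) px] := BP p Kp.
have := bigmin_le 1 [` Sp]%fset r; rewrite /r /=; lra.
Qed.

Lemma compact_metric_uniform {A : set X} {d d0 : X -> X -> R} {eta : R} :
  compact A -> is_metric_on A d -> metric_induces_topology A d ->
  is_metric_on setT d0 -> metric_induces_topology setT d0 -> 0 < eta ->
  exists2 e : R, 0 < e & forall x y, A x -> A y -> d x y < e -> d0 x y < eta.
Proof.
move=> Ac dm dt d0m d0t eta0.
have [|F [c [e e0 ce]]] := lebesgue_number (G := fun p => [set y | d0 p y < eta / 2])
    Ac dm dt (fun p => metric_ball_open d0 p (eta / 2) d0m d0t).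
  move=> x _; exists x => /=.
  by have [_ [_ /(_ erefl) ->] _ _] := d0m x x x I I I; rewrite divr_gt0.
exists e => // x y Ax Ay xy; have [k ck] := ce x Ax.
have /= cx : d0 (c k) x < eta / 2.
  by apply: ck => //; have [_ [_ /(_ erefl) ->] _ _] := dm x x x Ax Ax Ax.
have /= cy := ck y Ay xy.
have [_ _ sym _] := d0m (c k) x (c k) I I I.
have [_ _ _ tri] := d0m x (c k) y I I I; lra.
Qed.

End MetricSubspaces.

Section AlphaPow.
Context {R : realType}.

Lemma alpha_powE (a r : R) : 0 < a -> alpha_pow a r%:E = expR (r * ln a).
Proof. by move=> a0; rewrite /alpha_pow /powR gt_eqF. Qed.

Lemma alpha_pow_ge0 (a : R) v : 0 < a -> 0 <= alpha_pow a v.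
Proof. by move=> a0; case: v => [r||] //; rewrite alpha_powE // expR_ge0. Qed.

Lemma alpha_pow_lt (a t : R) v : 0 < a < 1 -> 0 < t -> v <> -oo%E ->
  (alpha_pow a v < t) = ((ln t / ln a)%:E < v)%E.
Proof.
move=> /andP[a0 a1] t0; have lna : ln a < 0 by rewrite ln_lt0 ?a0.
case: v => [r| |] // _; last by rewrite t0 ltey.
rewrite alpha_powE // lte_fin ltr_ndivrMr //.
by rewrite -(ltr_ln (x := expR _)) ?posrE ?expR_gt0 // expRK.
Qed.

Lemma alpha_pow_le (a t : R) v : 0 < a < 1 -> 0 < t -> v <> -oo%E ->
  (t <= alpha_pow a v) = (v <= (ln t / ln a)%:E)%E.
Proof. by move=> ? ? ?; rewrite leNgt alpha_pow_lt // -leNgt. Qed.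

Lemma alpha_pow_expRN_shift {k delta : R} {u w : \bar R} : 0 < k -> u <> -oo%E ->
  (u - delta%:E <= w)%E ->
  alpha_pow (expR (- k)) w <= expR (delta * k) * alpha_pow (expR (- k)) u.
Proof.
move=> k0; have a0 : 0 < expR (- k) by apply: expR_gt0.
case: w => [r| |]; last 2 first.
- by move=> _ _; rewrite mulr_ge0 ?expR_ge0 ?alpha_pow_ge0.
- by case: u => [q| |] //=; rewrite leeNy_eq.
case: u => [q| |] // _.
by rewrite lee_fin => h; rewrite !alpha_powE // expRK -expRD ler_expR; nra.
Qed.

(* The base [a] satisfies [a ^ (- delta) = sqrt 2]: the additive defect [delta]
   becomes the factor [sqrt 2], whose square [2] is what Frink's lemma needs. *)
Lemma alpha_pow_quasi_ultrametric {T : Type} {L : T -> T -> \bar R} {delta : R} :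
  0 < delta -> (forall x y, L x y <> -oo%E) ->
  (forall x y z, (Order.min (L x y) (L y z) - delta%:E <= L x z)%E) ->
  let a := expR (- (ln 2 / (2 * delta))) in
  forall x y z, alpha_pow a (L x z) <=
    expR (ln 2 / 2) * Num.max (alpha_pow a (L x y)) (alpha_pow a (L y z)).
Proof.
move=> delta0 Lninf Lq a x y z.
have k0 : 0 < ln 2 / (2 * delta) by rewrite divr_gt0 ?mulr_gt0 // ln_gt0 // ltr1n.
have -> : ln 2 / 2 = delta * (ln 2 / (2 * delta)) by field; rewrite gt_eqF.
rewrite /a; apply: le_trans (alpha_pow_expRN_shift k0 _ (Lq x y z)) _.
  by rewrite /Order.min; case: ifP.
rewrite ler_wpM2l ?expR_ge0 // /Order.min.
by case: ifP => _; rewrite le_max lexx ?orbT.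
Qed.


Lemma log_scale_bounded_apart {X : topologicalType} (A : set X)
    (l : X -> X -> \bar R) (d0 : X -> X -> R) (eta : R) :
  compact A -> log_scale_on A l ->
  is_metric_on setT d0 -> metric_induces_topology setT d0 -> 0 < eta ->
  exists B : R, forall x y, A x -> A y -> eta <= d0 x y -> (l x y <= B%:E)%E.
Proof.
move=> Ac [_ lNy _ _ [d [a [c [dm dt ac c1 dl]]]]] d0m d0t eta0.
have [e e0 de] := compact_metric_uniform Ac dm dt d0m d0t eta0.
have c0 : 0 < c by apply: lt_trans c1.
exists (ln (e / c) / ln a) => x y Ax Ay xy.
rewrite -alpha_pow_le ?divr_gt0 //; last exact: lNy.
rewrite ler_pdivrMr // mulrC; apply: le_trans _ (dl x y Ax Ay).2.
rewrite leNgt; apply/negP => /(de x y Ax Ay).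
by rewrite ltNge xy.
Qed.

End AlphaPow.

Section FrinkMetrization.
Context {R : realType} {T : Type}.
Variables (rho : T -> T -> R) (K : R).
Hypothesis rho_ge0 : forall x y, 0 <= rho x y.
Hypothesis rho_xx : forall x, rho x x = 0.
Hypothesis rho_sym : forall x y, rho x y = rho y x.
Hypothesis rho_quasi : forall x y z, rho x z <= K * Num.max (rho x y) (rho y z).
Hypothesis K_ge1 : 1 <= K.
Hypothesis K_sqr_le2 : K * K <= 2.

Definition chain_length (f : nat -> T) (a b : nat) :=
  \sum_(a <= i < b) rho (f i) (f i.+1).

Lemma chain_length_ge0 f a b : 0 <= chain_length f a b.
Proof. exact: sumr_ge0. Qed.

Lemma chain_length_cat f {a b c} : (a <= b <= c)%N ->
  chain_length f a c = chain_length f a b + chain_length f b c.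
Proof. by move=> /andP[ab bc]; rewrite /chain_length (big_cat_nat ab bc). Qed.

Lemma chain_length0 f a : chain_length f a a = 0.
Proof. by rewrite /chain_length big_geq. Qed.

Lemma chain_length1 f a : chain_length f a a.+1 = rho (f a) (f a.+1).
Proof. by rewrite /chain_length big_nat1. Qed.

(* The last [m] whose initial piece has at most half the length. *)
Lemma chain_halving f a b : (a < b)%N -> exists m, [/\ (a <= m < b)%N,
  chain_length f a m <= chain_length f a b / 2 &
  chain_length f m.+1 b <= chain_length f a b / 2].
Proof.
move=> ab; set S := chain_length f a b.
pose P m := ((a <= m) && (m <= b.-1))%N && (chain_length f a m <= S / 2).
have Pa : P a.
  by rewrite /P leqnn chain_length0 divr_ge0 ?chain_length_ge0 //=; lia.
have ubP m : P m -> (m <= b.-1)%N by move=> /andP[/andP[]].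
have [m /andP[/andP[am mb] Pm] mmax] := ex_maxnP (ex_intro _ a Pa) ubP.
exists m; split => //; first lia.
have [<-|mb'] := eqVneq m.+1 b; first by rewrite chain_length0 divr_ge0 ?chain_length_ge0.
have half_lt : S / 2 < chain_length f a m.+1.
  rewrite ltNge; apply/negP => h.
  have : P m.+1 by rewrite /P h andbT; lia.
  by move/mmax; lia.
have amb : (a <= m.+1 <= b)%N by lia.
by have := chain_length_cat f amb; rewrite -/S; lra.
Qed.

Lemma frink_chain_bound f a b : (a <= b)%N ->
  rho (f a) (f b) <= 2 * chain_length f a b.
Proof.
have K0 : 0 <= K := le_trans ler01 K_ge1.
move: {2}(b - a)%N (leqnn (b - a)) => n; elim: n a b => [|n IH] a b hn ab;
  (have [ba|ltab] := leqP b a;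
    [by rewrite (_ : b = a) ?rho_xx ?chain_length0 ?mulr0 //; lia|]); first lia.
set S := chain_length f a b.
have [m [/andP[am mb] hm1 hm2]] := chain_halving f a b ltab; rewrite -/S in hm1 hm2.
have amb : (a <= m <= b)%N by lia.
have mmb : (m <= m.+1 <= b)%N by lia.
have Ssplit : S = chain_length f a m + rho (f m) (f m.+1) + chain_length f m.+1 b.
  by rewrite /S (chain_length_cat f amb) (chain_length_cat f mmb) chain_length1 addrA.
have h1 : rho (f a) (f m) <= S.
  have := IH a m ltac:(lia) am; lra.
have h2 : rho (f m) (f m.+1) <= S.
  by have := chain_length_ge0 f a m; have := chain_length_ge0 f m.+1 b; lra.
have h3 : rho (f m.+1) (f b) <= S.
  have := IH m.+1 b ltac:(lia) mb; lra.
have h4 : rho (f m) (f b) <= K * S.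
  apply: le_trans (rho_quasi _ (f m.+1) _) _.
  by rewrite ler_wpM2l // ge_max h2 h3.
have S0 : 0 <= S := chain_length_ge0 f a b.
apply: le_trans (rho_quasi _ (f m) _) _.
apply: le_trans (_ : K * (K * S) <= _); last by rewrite mulrA ler_wpM2r.
rewrite ler_wpM2l // ge_max h4 andbT.
by apply: le_trans h1 _; rewrite ler_peMl.
Qed.

Definition chain_lengths x y := [set r : R | exists n f,
  [/\ f 0%N = x, f n = y & r = chain_length f 0 n]].

Definition frink_dist x y := inf (chain_lengths x y).

Lemma frink_dist_le x y n f : f 0%N = x -> f n = y ->
  frink_dist x y <= chain_length f 0 n.
Proof.
move=> f0 fn; apply: ge_inf; last by exists n, f.
by exists 0 => r [m [g [_ _ ->]]]; apply: chain_length_ge0.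
Qed.

Lemma frink_dist_ge x y b :
  (forall n f, f 0%N = x -> f n = y -> b <= chain_length f 0 n) ->
  b <= frink_dist x y.
Proof.
move=> lb; apply: lb_le_inf => [|r [n [f [f0 fn ->]]]]; last exact: lb.
by exists (rho x y), 1%N, (fun i => if i == 0%N then x else y); rewrite chain_length1.
Qed.

Lemma frink_dist_ge0 x y : 0 <= frink_dist x y.
Proof. by apply: frink_dist_ge => n f _ _; apply: chain_length_ge0. Qed.

Lemma frink_dist_le_rho x y : frink_dist x y <= rho x y.
Proof.
have := frink_dist_le x y 1 (fun i => if i == 0%N then x else y) erefl erefl.
by rewrite chain_length1.
Qed.

Lemma rho_le_frink_dist x y : rho x y <= 2 * frink_dist x y.
Proof.
suff : rho x y / 2 <= frink_dist x y by lra.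
apply: frink_dist_ge => n f <- <-.
by have := frink_chain_bound f 0 n (leq0n n); lra.
Qed.

Lemma frink_dist_sym x y : frink_dist x y = frink_dist y x.
Proof.
wlog suff : x y / frink_dist x y <= frink_dist y x.
  by move=> le; apply/eqP; rewrite eq_le !le.
apply: frink_dist_ge => n f f0 fn.
apply: le_trans (frink_dist_le x y n (fun i => f (n - i)%N) _ _) _.
- by rewrite subn0.
- by rewrite subnn.
rewrite /chain_length big_nat_rev le_eqVlt; apply/orP; left; apply/eqP.
apply: eq_big_nat => i /andP[_ i_lt]; rewrite add0n rho_sym.
by congr (rho (f _) (f _)); lia.
Qed.

Lemma chain_length_concat f g n m : f n = g 0%N ->
  chain_length (fun i => if (i <= n)%N then f i else g (i - n)%N) 0 (n + m) =
  chain_length f 0 n + chain_length g 0 m.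
Proof.
move=> fg; rewrite (@chain_length_cat _ 0 n) ?leq_addr //; congr (_ + _).
  by apply: eq_big_nat => i /andP[_ i_lt]; rewrite ifT ?(ltnW i_lt) // ifT.
rewrite /chain_length -{1}(add0n n) big_addn addKn.
apply: eq_big_nat => i /andP[_ i_lt].
rewrite (_ : (i + n <= n)%N = (i == 0%N)); last by lia.
rewrite (_ : ((i + n).+1 <= n)%N = false); last by lia.
rewrite (_ : (i + n - n = i)%N); last by lia.
rewrite (_ : ((i + n).+1 - n = i.+1)%N); last by lia.
by case: eqP => [->|//]; rewrite add0n fg.
Qed.

Lemma frink_dist_triangle x y z : frink_dist x z <= frink_dist x y + frink_dist y z.
Proof.
suff sub_le n f : f 0%N = x -> f n = y ->
    frink_dist x z - chain_length f 0 n <= frink_dist y z.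
  suff : frink_dist x z - frink_dist y z <= frink_dist x y by lra.
  by apply: frink_dist_ge => n f f0 fn; have := sub_le n f f0 fn; lra.
move=> f0 fn; apply: frink_dist_ge => m g g0 gm.
pose h i := if (i <= n)%N then f i else g (i - n)%N.
have h0 : h 0%N = x by rewrite /h leq0n.
have hnm : h (n + m)%N = z.
  rewrite /h; case: leqP => [nm|_]; last by rewrite addKn.
  by rewrite (_ : m = 0%N) in gm *; [rewrite addn0 fn -g0|lia].
by have := frink_dist_le _ _ _ _ h0 hnm; rewrite chain_length_concat ?fn ?g0 //; lra.
Qed.

Lemma frink_metrization : (forall x y, rho x y = 0 -> x = y) ->
  [/\ forall x y z, [/\ 0 <= frink_dist x y, frink_dist x y = 0 <-> x = y,
         frink_dist x y = frink_dist y x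
       & frink_dist x z <= frink_dist x y + frink_dist y z],
     forall x y, frink_dist x y <= rho x y
   & forall x y, rho x y <= 2 * frink_dist x y].
Proof.
move=> rho_eq0; split=> [x y z| |]; [|exact: frink_dist_le_rho|exact: rho_le_frink_dist].
split; [exact: frink_dist_ge0| |exact: frink_dist_sym|exact: frink_dist_triangle].
split=> [D0|<-]; last first.
  by apply/eqP; rewrite eq_le frink_dist_ge0 -(rho_xx x) frink_dist_le_rho.
by apply: rho_eq0; have := rho_le_frink_dist x y; have := rho_ge0 x y; lra.
Qed.

End FrinkMetrization.

Arguments frink_metrization {R T rho K}.

Section ExtendedShifts.
Context {R : realType}.
Local Open Scope ereal_scope.

Lemma leeD_weaken {u v : \bar R} {C C' : R} :
  u <= v + C%:E -> (C <= C')%R -> u <= v + C'%:E.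
Proof. by move=> uv CC'; apply: le_trans uv (leeD (lexx v) _); rewrite lee_fin. Qed.

Lemma lee_min_shift {u v u' v' : \bar R} {C : R} :
  u <= u' + C%:E -> v <= v' + C%:E -> Order.min u v <= Order.min u' v' + C%:E.
Proof.
move=> uu vv; have [_|_] := leP u' v'.
  by apply: le_trans uu; rewrite ge_min lexx.
by apply: le_trans vv; rewrite ge_min lexx orbT.
Qed.

Lemma lee_subr_weaken {u w : \bar R} {D D' : R} :
  u - D%:E <= w -> (D <= D')%R -> u - D'%:E <= w.
Proof. by case: u => [u| |]; case: w => [w| |] //=; rewrite ?lee_fin ?leey ?leNye //; lra. Qed.

Lemma lee_sub_bound {u w : \bar R} {B D : R} :
  u <= B%:E -> (B <= D)%R -> 0 <= w -> u - D%:E <= w.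
Proof. by case: u => [u| |]; case: w => [w| |] //=; rewrite ?lee_fin ?leey ?leNye //; lra. Qed.

Lemma lee_defect_transfer {u u' w w' : \bar R} {C D : R} :
  u <= u' + C%:E -> u' - D%:E <= w -> w <= w' + C%:E ->
  u - (2 * C + D)%:E <= w'.
Proof.
by case: u => [u| |]; case: u' => [u'| |]; case: w => [w| |]; case: w' => [w'| |];
  rewrite //= ?lee_fin ?leey ?leNye //; lra.
Qed.

Lemma lte_shift_trans {v w : \bar R} {M C : R} :
  (M + C)%:E < v -> v <= w + C%:E -> M%:E < w.
Proof.
by case: v => [v| |]; case: w => [w| |];
  rewrite //= ?lte_fin ?lee_fin ?ltey ?leey ?leNye //; lra.
Qed.

End ExtendedShifts.

Section Gluing.
Context {R : realType} {X : topologicalType} {I : Type}.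
Variables (U : I -> set X) (l : I -> X -> X -> \bar R) (d0 : X -> X -> R).
Hypothesis X_compact : compact [set: X].
Hypothesis d0_metric : is_metric_on setT d0.
Hypothesis d0_topology : metric_induces_topology setT d0.
Hypothesis U_open : forall i, open (U i).
Hypothesis U_cover : forall x, exists i, U i x.
Hypothesis l_log_scale : forall i, positive_log_scale_on (closure (U i)) (l i).
Hypothesis l_lipschitz : forall i j,
  lipschitz_equiv_on (closure (U i) `&` closure (U j)) (l i) (l j).

Local Notation cl i := (closure (U i)).

Lemma d0_xx x : d0 x x = 0.
Proof. by have [_ [_ /(_ erefl)]] := d0_metric x x x Logic.I Logic.I Logic.I. Qed.

Lemma l_sym {i x y} : cl i x -> cl i y -> l i x y = l i y x.
Proof. by have [[]] := l_log_scale i; auto. Qed.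

Lemma l_gt0 {i x y} : cl i x -> cl i y -> (0 < l i x y)%E.
Proof. by have [_] := l_log_scale i; apply. Qed.

Lemma l_eq_pinfty {i x y} : cl i x -> cl i y -> (l i x y = +oo%E <-> x = y).
Proof. by have [[]] := l_log_scale i; auto. Qed.

Lemma l_quasi i : exists delta : R, forall x y z, cl i x -> cl i y -> cl i z ->
  (Order.min (l i x y) (l i y z) - delta%:E <= l i x z)%E.
Proof. by have [[_ _ _ [delta _ q] _] _] := l_log_scale i; exists delta. Qed.

Lemma l_bounded_apart i eta : 0 < eta -> exists B : R, forall x y,
  cl i x -> cl i y -> eta <= d0 x y -> (l i x y <= B%:E)%E.
Proof.
have cl_compact : compact (cl i).
  exact: subclosed_compact (@closed_closure _ _) X_compact (subsetT _).
by apply: log_scale_bounded_apart cl_compact (l_log_scale i).1 d0_metric d0_topology.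
Qed.

Section Glued.
Context {F : finType}.
Variables (c : F -> I) (eps : R).
Hypothesis eps_gt0 : 0 < eps.
Hypothesis eps_lebesgue : forall x, exists k, forall y, d0 x y < eps -> U (c k) y.

Definition glued x y : \bar R :=
  if [pick k | `[< cl (c k) x /\ cl (c k) y >]] is Some k then l (c k) x y
  else 0%E.

Lemma glued_spec x y :
  (exists k, [/\ cl (c k) x, cl (c k) y & glued x y = l (c k) x y]) \/
  (glued x y = 0%E /\ forall k, cl (c k) x -> cl (c k) y -> False).
Proof.
rewrite /glued; case: pickP => [k /asboolP[cx cy]|none]; first by left; exists k.
by right; split => // k cx cy; have := none k; rewrite asboolT.
Qed.

Lemma glued_sym x y : glued x y = glued y x.
Proof.
rewrite /glued (@eq_pick _ _ (fun k => `[< cl (c k) x /\ cl (c k) y >])).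
  by case: pickP => // k /asboolP[cx cy]; apply: l_sym.
by move=> k; apply/asboolP/asboolP => -[? ?].
Qed.

Lemma glued_ge0 x y : (0 <= glued x y)%E.
Proof. by have [[k [cx cy ->]]|[-> _]] := glued_spec x y; [exact/ltW/l_gt0|]. Qed.

Lemma glued_neq_ninf x y : glued x y <> -oo%E.
Proof. by have := glued_ge0 x y; case: (glued x y). Qed.

Lemma glued_near x y : d0 x y < eps -> exists k, cl (c k) x /\ cl (c k) y.
Proof.
move=> xy; have [k ck] := eps_lebesgue x; exists k.
by split; apply: subset_closure; apply: ck; rewrite ?d0_xx.
Qed.

Lemma glued_eq_pinfty x y : glued x y = +oo%E <-> x = y.
Proof.
have [[k [cx cy ->]]|[-> apart]] := glued_spec x y; first exact: l_eq_pinfty.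
split=> // xy; subst y.
have [k [cx _]] := glued_near x x ltac:(by rewrite d0_xx).
by case: (apart k).
Qed.

Lemma glued_bounded_apart eta : 0 < eta ->
  exists2 B : R, 0 <= B & forall x y, eta <= d0 x y -> (glued x y <= B%:E)%E.
Proof.
move=> eta0; pose P k (B : R) := forall x y, cl (c k) x -> cl (c k) y ->
  eta <= d0 x y -> (l (c k) x y <= B%:E)%E.
have [|B B0 lB] := finite_common_bound P (fun k => l_bounded_apart (c k) _ eta0).
  move=> k B B' lB BB' x y cx cy xy.
  by apply: le_trans (lB x y cx cy xy) _; rewrite lee_fin.
exists B => // x y xy.
by have [[k [cx cy ->]]|[-> _]] := glued_spec x y; [exact: lB|rewrite lee_fin].
Qed.

Lemma glued_lipschitz i : lipschitz_equiv_on (cl i) glued (l i).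
Proof.
pose P k (C : R) := forall x y, (cl (c k) `&` cl i) x -> (cl (c k) `&` cl i) y ->
  (l (c k) x y <= l i x y + C%:E)%E /\ (l i x y <= l (c k) x y + C%:E)%E.
have [|C C0 lC] := finite_common_bound P (fun k => l_lipschitz (c k) i).
  move=> k C C' lC CC' x y cx cy.
  by have [le1 le2] := lC x y cx cy; split; apply: leeD_weaken CC'.
have [B lB] := l_bounded_apart i _ eps_gt0.
have MC : C <= Num.max C B by rewrite le_max lexx.
have MB : B <= Num.max C B by rewrite le_max lexx orbT.
exists (Num.max C B) => x y cx cy.
have [[k [ckx cky ->]]|[-> apart]] := glued_spec x y.
  have [le1 le2] := lC k x y (conj ckx cx) (conj cky cy).
  by split; apply: leeD_weaken MC.
have far : eps <= d0 x y.
  by rewrite leNgt; apply/negP => /glued_near[k [ckx cky]]; apply: (apart k).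
have := lB x y cx cy far; have := l_gt0 cx cy.
by case: (l i x y) => [r| |] //=; rewrite ?lte_fin ?lee_fin ?add0e => r0 rB; split; lra.
Qed.

Lemma glued_quasi_ultrametric : exists2 delta : R, 0 < delta &
  forall x y z, (Order.min (glued x y) (glued y z) - delta%:E <= glued x z)%E.
Proof.
pose PL k (C : R) := forall x y, cl (c k) x -> cl (c k) y ->
  (glued x y <= l (c k) x y + C%:E)%E /\ (l (c k) x y <= glued x y + C%:E)%E.
have [|C C0 lC] := finite_common_bound PL (fun k => glued_lipschitz (c k)).
  move=> k C C' lC CC' x y cx cy.
  by have [le1 le2] := lC x y cx cy; split; apply: leeD_weaken CC'.
pose PQ k (D : R) := forall x y z, cl (c k) x -> cl (c k) y -> cl (c k) z ->
  (Order.min (l (c k) x y) (l (c k) y z) - D%:E <= l (c k) x z)%E.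
have [|D D0 lD] := finite_common_bound PQ (fun k => l_quasi (c k)).
  by move=> k D D' lD DD' x y z cx cy cz; apply: lee_subr_weaken DD'; apply: lD.
have [B B0 lB] := glued_bounded_apart _ eps_gt0.
exists (B + 2 * C + D + 1) => [|x y z]; first lra.
have [/andP[yx yz]|] := boolP ((d0 y x < eps) && (d0 y z < eps)).
  have [k ck] := eps_lebesgue y.
  have cx : cl (c k) x by apply/subset_closure/ck.
  have cy : cl (c k) y by apply/subset_closure/ck; rewrite d0_xx.
  have cz : cl (c k) z by apply/subset_closure/ck.
  apply: lee_subr_weaken (_ : 2 * C + D <= _); last lra.
  apply: lee_defect_transfer (lD k x y z cx cy cz) (lC k x z cx cz).2.
  exact: lee_min_shift (lC k x y cx cy).1 (lC k y z cy cz).1.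
rewrite negb_and -!leNgt => far.
apply: (lee_sub_bound (B := B)) (glued_ge0 x z); last lra.
case/orP: far => /lB far; apply: le_trans far.
  by rewrite glued_sym ge_min lexx.
by rewrite ge_min lexx orbT.
Qed.

Lemma glued_gt_near x (M : R) :
  exists W, [/\ open W, W x & forall y, W y -> (M%:E < glued x y)%E].
Proof.
have [j Ujx] := U_cover x; have cx : cl j x := subset_closure Ujx.
have [C lC] := glued_lipschitz j.
have [[_ lNy _ _ [d [a [b [dm dt ab b1 dl]]]]] _] := l_log_scale j.
have b0 : 0 < b by apply: lt_trans b1.
have /andP[a0 a1] := ab; have lna : ln a < 0 by rewrite ln_lt0 ?a0.
pose t := expR ((M + C) * ln a).
have [W [oW Wx Wd]] : exists W, [/\ open W, W x &
    forall y, cl j y -> W y -> [set y | d x y < t / b] y].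
  by apply/(dt x cx); exists (t / b); [rewrite divr_gt0 ?expR_gt0|move=> y].
exists (W `&` U j); split => [|//|y [Wy Ujy]]; first exact: openI.
have cy : cl j y := subset_closure Ujy.
have small : alpha_pow a (l j x y) < t.
  have := le_lt_trans (dl x y cx cy).1 (Wd y cy Wy).
  by rewrite mulrC ltr_pM2r ?invr_gt0.
move: small; rewrite alpha_pow_lt ?expR_gt0 //; last exact: lNy.
rewrite /t expRK mulfK ?lt_eqF // => large.
exact: lte_shift_trans large (lC x y cx cy).2.
Qed.

Lemma glued_dist_topology {a : R} {D : X -> X -> R} : 0 < a < 1 ->
  (forall x y, D x y <= alpha_pow a (glued x y)) ->
  (forall x y, alpha_pow a (glued x y) <= 2 * D x y) ->
  metric_induces_topology setT D.
Proof.
move=> ha Dle leD x _ V; have /andP[a0 a1] := ha.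
have lna : ln a < 0 by rewrite ln_lt0 ?a0.
split=> [[e e0 De]|[W [oW Wx WV]]].
  have [W [oW Wx WG]] := glued_gt_near x (ln e / ln a).
  exists W; split=> // y _ Wy; apply: De => //; apply: le_lt_trans (Dle x y) _.
  by rewrite alpha_pow_lt ?WG //; apply: glued_neq_ninf.
have [e e0 eW] : exists2 e : R, 0 < e & forall y, setT y -> d0 x y < e -> W y.
  by apply/(d0_topology x Logic.I); exists W; split => // y _.
have [B _ lB] := glued_bounded_apart _ e0.
exists (expR (B * ln a) / 2) => [|y _ Dxy]; first by rewrite divr_gt0 ?expR_gt0.
apply: WV => //; apply: eW => //; rewrite ltNge; apply/negP => /lB GB.
have : alpha_pow a (glued x y) < expR (B * ln a).
  by apply: le_lt_trans (leD x y) _; lra.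
rewrite alpha_pow_lt ?expR_gt0 //; last exact: glued_neq_ninf.
by rewrite expRK mulfK ?lt_eqF // ltNge GB.
Qed.

Lemma glued_metric : exists (d : X -> X -> R) (a b : R),
  [/\ is_metric_on setT d, metric_induces_topology setT d, 0 < a < 1, 1 < b
    & forall x y, setT x -> setT y ->
        b^-1 * alpha_pow a (glued x y) <= d x y /\
        d x y <= b * alpha_pow a (glued x y)].
Proof.
have [delta delta0 glued_q] := glued_quasi_ultrametric.
have := alpha_pow_quasi_ultrametric delta0 glued_neq_ninf glued_q.
set a := expR _; set K := expR _ => rho_quasi.
have k0 : 0 < ln 2 / (2 * delta) by rewrite divr_gt0 ?mulr_gt0 // ln_gt0 // ltr1n.
have a0 : 0 < a := expR_gt0 _.
have ha : 0 < a < 1 by rewrite a0 -expR0 ltr_expR oppr_lt0.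
have K_ge1 : 1 <= K by rewrite -expR0 ler_expR divr_ge0 // ln_ge0 // ler1n.
have K_sqr : K * K <= 2 by rewrite -expRD -splitr lnK ?posrE.
pose rho x y := alpha_pow a (glued x y).
have rho_ge0 x y : 0 <= rho x y := alpha_pow_ge0 _ _ a0.
have rho_xx x : rho x x = 0 by rewrite /rho (glued_eq_pinfty x x).2.
have rho_sym x y : rho x y = rho y x by rewrite /rho glued_sym.
have rho_eq0 x y : rho x y = 0 -> x = y.
  rewrite /rho -glued_eq_pinfty; have := glued_neq_ninf x y.
  by case: (glued x y) => [r| |] // _; rewrite alpha_powE // => /eqP; rewrite gt_eqF ?expR_gt0.
have [Dm Dle leD] :=
  frink_metrization rho_ge0 rho_xx rho_sym rho_quasi K_ge1 K_sqr rho_eq0.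
exists (frink_dist rho), a, 2; split.
- by move=> x y z _ _ _; apply: Dm.
- exact: glued_dist_topology ha Dle leD.
- exact: ha.
- by lra.
- by move=> x y _ _; move: (Dle x y) (leD x y) (rho_ge0 x y); rewrite /rho; split; lra.
Qed.

Lemma glued_log_scale : log_scale_on setT glued.
Proof.
split=> [x y _ _|x y _ _|x y _ _||]; [exact: glued_sym|exact: glued_neq_ninf|
  exact: glued_eq_pinfty| |exact: glued_metric].
have [delta delta0 q] := glued_quasi_ultrametric.
by exists delta => [|x y z _ _ _]; [exact: ltW|exact: q].
Qed.

End Glued.

Lemma exists_glued_log_scale : exists L : X -> X -> \bar R,
  log_scale_on setT L /\ forall i, lipschitz_equiv_on (cl i) L (l i).
Proof.
have [F [c [eps eps0 leb]]] := lebesgue_number X_compact d0_metric d0_topology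
  U_open (fun x _ => U_cover x).
have eps_lebesgue x : exists k, forall y, d0 x y < eps -> U (c k) y.
  by have [k ck] := leb x Logic.I; exists k => y; apply: ck.
exists (glued c); split; first exact: glued_log_scale _ _ eps0 eps_lebesgue.
exact: glued_lipschitz _ _ eps0 eps_lebesgue.
Qed.

End Gluing.

Theorem theorem1p1p8 (R : realType) (X : topologicalType) (I : Type)
  (U : I -> set X) (l : I -> X -> X -> \bar R) :
  compact [set: X] -> @metrizable_space R X ->
  (forall i, open (U i)) -> (forall x : X, exists i, U i x) ->
  (forall i, positive_log_scale_on (closure (U i)) (l i)) ->
  (forall i j, lipschitz_equiv_on (closure (U i) `&` closure (U j)) (l i) (l j)) ->
  exists L : X -> X -> \bar R,
    log_scale_on [set: X] L /\
    forall i, lipschitz_equiv_on (closure (U i)) L (l i).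
Proof.
move=> X_compact [d0 [d0_metric d0_topology]].
exact: (exists_glued_log_scale U l d0 X_compact d0_metric d0_topology).
Qed.
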